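(* Let $a>0$, $\beta>0$, let $\lambda$ be feasible, and let $C_1>25$. Then there exists $0<\delta_g(\beta,\lambda,C_1)\le\delta_\mu(\beta,\lambda)$ such that for every $0<\delta\le\delta_g$ and every real $k\ge k_0(\delta)$, \[ |g|^2\le C_1\delta^2 . \]
   Context: For $0<\delta<1$ and constants $\beta>0$, $\lambda\in\mathbb{R}$, put $\mu=\delta+\lambda\delta^{\beta}$. The constant $\lambda$ is called feasible if $\lambda>0$ when $0<\beta<1$, $\lambda\ge -1$ when $\beta=1$, and $\lambda\neq 0$ when $\beta>1$. For feasible $\lambda$, $\delta_\mu=\delta_\mu(\beta,\lambda)\in(0,1)$ denotes a number such that $\mu\ge 0$ for all $0<\delta\le\delta_\mu$. For $k\in\mathbb{R}$ define \[ g=g(k,\delta)=\mathrm{i}\delta\left[1-\frac{(\delta+2\mathrm{i})(2\mathrm{i}-\lambda\delta^{\beta})}{\delta(2\delta+\lambda\delta^{\beta})}\mathrm{e}^{-2|k|a}\right], \qquad k_0(\delta)=\frac{1}{2a}\ln\!\left(\frac{1}{2\delta^2+\lambda\delta^{\beta+1}}\right). \] *)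

From Stdlib Require Import Reals.
From Coquelicot Require Import Coquelicot.
Open Scope R_scope.

Definition rpow (x y : R) : R := Rpower x y.

Definition feasible (beta lam : R) : Prop :=
  (0 < beta < 1 -> 0 < lam) /\ (beta = 1 -> -1 <= lam) /\ (1 < beta -> lam <> 0).

Definition mu (beta lam delta : R) : R := delta + lam * rpow delta beta.

(* g(k, delta) = i delta [1 - (delta+2i)(2i - lam delta^beta)/(delta(2delta+lam delta^beta)) e^{-2|k|a}] *)
Definition g (a beta lam k delta : R) : C :=
  Cmult (0, delta)
    (Cminus 1
       (Cmult
          (Cdiv (Cmult (delta, 2) (- lam * rpow delta beta, 2))
                (RtoC (delta * (2 * delta + lam * rpow delta beta))))
          (RtoC (exp (- 2 * Rabs k * a))))).

Definition k0 (a beta lam delta : R) : R :=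
  / (2 * a) * ln (/ (2 * delta ^ 2 + lam * rpow delta (beta + 1))).

(* Writing [L = lam delta^beta] and [D = delta (2 delta + L) = 2 delta^2 + lam delta^(beta+1)],
   one computes [|g|^2 = delta^2 ((1 + A s)^2 + (B s)^2)] with [A = delta L + 4],
   [B = 2 delta - 2 L] and [s = e^(-2|k|a) / D].  The condition [k >= k0] says exactly
   [s <= 1], and [mu >= 0] gives [D > 0].  Once [delta] and [|L|] are at most
   [eta <= 1], the bracket is at most [1 + 2A + A^2 + B^2 = 1 + 2A + (delta^2 + 4)(L^2 + 4)
   <= 25 + 11 eta], so it suffices to choose [delta_g] with [eta = min 1 ((C1 - 25)/11)]. *)
From Stdlib Require Import Reals Lra Psatz.
From Coquelicot Require Import Coquelicot.
Open Scope R_scope.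

Lemma Cmod_g_sqr a beta lam k d :
  d * (2 * d + lam * rpow d beta) <> 0 ->
  Cmod (g a beta lam k d) ^ 2 =
  d ^ 2 * ((1 + (d * (lam * rpow d beta) + 4)
                * (exp (- 2 * Rabs k * a) / (d * (2 * d + lam * rpow d beta)))) ^ 2
         + ((2 * d - 2 * (lam * rpow d beta))
                * (exp (- 2 * Rabs k * a) / (d * (2 * d + lam * rpow d beta)))) ^ 2).
Proof.
intros HD.
assert (Hd : d <> 0) by (intros ->; apply HD; ring).
unfold Cmod; rewrite pow2_sqrt by (apply Rplus_le_le_0_compat; apply pow2_ge_0).
unfold g, Cdiv, Cminus, Cmult, Cinv, RtoC, Cplus, Copp; simpl.
field; split; [intros H; apply HD; rewrite H; ring | exact Hd].
Qed.

Lemma scaled_bracket_le A B s : 0 <= A -> 0 <= s <= 1 ->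
  (1 + A * s) ^ 2 + (B * s) ^ 2 <= (1 + A) ^ 2 + B ^ 2.
Proof.
intros HA Hs.
assert (0 <= A * (1 - s) * (2 + A + A * s)) by (apply Rmult_le_pos; nra).
assert (0 <= B * B * ((1 - s) * (1 + s))) by (apply Rmult_le_pos; nra).
nra.
Qed.

Lemma g_bracket_le d L s eta : Rabs d <= eta -> Rabs L <= eta -> eta <= 1 -> 0 <= s <= 1 ->
  (1 + (d * L + 4) * s) ^ 2 + ((2 * d - 2 * L) * s) ^ 2 <= 25 + 11 * eta.
Proof.
intros Hd HL He Hs.
apply Rabs_le_between in Hd, HL.
assert (HdL : - (eta * eta) <= d * L <= eta * eta) by (split; nra).
assert (eta * eta <= 1) by nra.
eapply Rle_trans; [apply scaled_bracket_le; [lra | exact Hs] |].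
replace ((1 + (d * L + 4)) ^ 2 + (2 * d - 2 * L) ^ 2)
  with (1 + 2 * (d * L + 4) + (d * d + 4) * (L * L + 4)) by ring.
assert (d * d <= eta * eta) by nra.
assert (L * L <= eta * eta) by nra.
assert (d * d * (L * L) <= eta * eta * (eta * eta)) by (apply Rmult_le_compat; nra).
nra.
Qed.

Lemma ex_rpow_small beta c eps : 0 < beta -> 0 <= c -> 0 < eps ->
  exists t, 0 < t /\ forall d, 0 < d <= t -> c * rpow d beta <= eps.
Proof.
intros Hb Hc He.
assert (Hq : 0 < eps / (c + 1)) by (apply Rdiv_lt_0_compat; lra).
set (t := Rpower (eps / (c + 1)) (/ beta)).
assert (Htb : Rpower t beta = eps / (c + 1)).
{ unfold t; rewrite Rpower_mult, Rinv_l by lra; apply Rpower_1, Hq. }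
exists t; split; [apply exp_pos |].
intros d [Hd0 Hdt].
assert (Hr : rpow d beta <= eps / (c + 1)) by (rewrite <- Htb; apply Rle_Rpower_l; lra).
apply Rle_trans with (c * (eps / (c + 1))); [apply Rmult_le_compat_l; lra |].
unfold Rdiv; rewrite <- Rmult_assoc; apply Rmult_le_reg_r with (c + 1); [lra |].
rewrite Rmult_assoc, Rinv_l by lra; nra.
Qed.

Lemma k0_arg_eq beta lam d : 0 < d ->
  2 * d ^ 2 + lam * rpow d (beta + 1) = d * (2 * d + lam * rpow d beta).
Proof.
intros Hd; unfold rpow; rewrite Rpower_plus, Rpower_1 by exact Hd; ring.
Qed.

Lemma exp_le_of_k0_le a beta lam d k : 0 < a ->
  0 < 2 * d ^ 2 + lam * rpow d (beta + 1) -> k0 a beta lam d <= k ->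
  exp (- 2 * Rabs k * a) <= 2 * d ^ 2 + lam * rpow d (beta + 1).
Proof.
unfold k0; set (D := 2 * d ^ 2 + lam * rpow d (beta + 1)); intros Ha HD Hk.
rewrite ln_Rinv in Hk by exact HD.
apply Rmult_le_compat_l with (r := 2 * a) in Hk; [| lra].
rewrite <- Rmult_assoc, Rinv_r, Rmult_1_l in Hk by lra.
assert (Hexp : - 2 * Rabs k * a <= ln D) by (pose proof (Rle_abs k); nra).
rewrite <- (exp_ln D) by exact HD.
destruct (Rle_lt_or_eq_dec _ _ Hexp) as [Hlt | ->]; [left; apply exp_increasing, Hlt | lra].
Qed.

Theorem lemma4p1 (beta lam C1 delta_mu : R) :
  0 < beta -> feasible beta lam -> 25 < C1 ->
  0 < delta_mu < 1 ->
  (forall delta, 0 < delta <= delta_mu -> 0 <= mu beta lam delta) ->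
  exists delta_g, 0 < delta_g <= delta_mu /\
    forall a, 0 < a ->
    forall delta k, 0 < delta <= delta_g -> k0 a beta lam delta <= k ->
      (Cmod (g a beta lam k delta)) ^ 2 <= C1 * delta ^ 2.
Proof.
intros Hb _ HC Hdm Hmu.
set (eta := Rmin 1 ((C1 - 25) / 11)).
assert (He : 0 < eta) by (apply Rmin_glb_lt; lra).
assert (He1 : eta <= 1) by apply Rmin_l.
assert (HeC : eta <= (C1 - 25) / 11) by apply Rmin_r.
destruct (ex_rpow_small beta (Rabs lam) eta Hb (Rabs_pos lam) He) as [t [Ht HL]].
exists (Rmin delta_mu (Rmin eta t)); split.
{ split; [repeat apply Rmin_glb_lt; lra | apply Rmin_l]. }
intros a Ha d k Hd Hk.
pose proof (Rmin_l delta_mu (Rmin eta t)); pose proof (Rmin_r delta_mu (Rmin eta t)).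
pose proof (Rmin_l eta t); pose proof (Rmin_r eta t).
assert (Hr : 0 < rpow d beta) by apply exp_pos.
assert (HLd : Rabs (lam * rpow d beta) <= eta).
{ rewrite Rabs_mult, (Rabs_pos_eq (rpow d beta)) by lra; apply HL; lra. }
assert (HD : 0 < d * (2 * d + lam * rpow d beta)).
{ assert (0 <= mu beta lam d) by (apply Hmu; lra); unfold mu in *; nra. }
assert (Hs : exp (- 2 * Rabs k * a) <= d * (2 * d + lam * rpow d beta)).
{ rewrite <- k0_arg_eq by lra; apply exp_le_of_k0_le; [| rewrite k0_arg_eq |]; lra. }
rewrite Cmod_g_sqr by lra; rewrite Rmult_comm.
apply Rmult_le_compat_r; [apply pow2_ge_0 |].
apply Rle_trans with (25 + 11 * eta); [| lra].
apply g_bracket_le; [rewrite Rabs_pos_eq; lra | exact HLd | exact He1 |].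
split; [apply Rlt_le, Rdiv_lt_0_compat; [apply exp_pos | exact HD] |].
apply Rmult_le_reg_r with (d * (2 * d + lam * rpow d beta)); [exact HD |].
unfold Rdiv; rewrite Rmult_assoc, Rinv_l by lra; lra.
Qed.
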